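(* Let $N\equiv 3\pmod 4$ be a prime, let $C\in M_2(\mathbb Z)$ with $c:=\det C\neq 0$ and $(c,N)=1$. Choose integers $s,t$ with $sN+tc=1$ and put $X=tc\cdot C^{-1}$. Then for all $Q,T\in\mathscr S$, \[ K(Q,T;NC)=K(XQX^T,T;NI)\,K(s^2Q,T;C). \]
   Context: $\mathscr S$ is the set of symmetric positive definite half-integral $2\times2$ matrices with integral diagonal, $\Lambda$ the set of symmetric integral $2\times 2$ matrices, $I$ the $2\times 2$ identity. For $C'\in M_2(\mathbb Z)$ with $\det C'\neq 0$, $K(Q,T;C')=\sum_De(\mathrm{tr}(AC'^{-1}Q+C'^{-1}DT))$, where $D$ runs over $\{D\in M_2(\mathbb Z)\bmod C'\Lambda:\exists\begin{pmatrix}*&*\\C'&D\end{pmatrix}\in\mathrm{Sp}_4(\mathbb Z)\}$ and $A$ is any matrix with $\begin{pmatrix}A&*\\C'&D\end{pmatrix}\in\mathrm{Sp}_4(\mathbb Z)$; $e(x)=e^{2\pi ix}$. Note $X=t\cdot\mathrm{adj}(C)$ is integral. *)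

From HB Require Import structures.
From mathcomp Require Import all_boot all_order all_algebra.
From mathcomp Require Import boolp reals trigo.
From mathcomp Require Import complex.
From Stdlib Require ClassicalEpsilon.
Unset Printing Implicit Defensive.
Import Order.TTheory GRing.Theory Num.Theory.
Local Open Scope ring_scope.

Definition toQ {m n : nat} (A : 'M[int]_(m, n)) : 'M[rat]_(m, n) :=
  map_mx (fun z : int => z%:~R) A.

Definition J4 : 'M[int]_(2 + 2) := block_mx 0 1%:M (- 1%:M) 0.
Definition symplectic (M : 'M[int]_(2 + 2)) : bool := M^T *m J4 *m M == J4.

Definition completable (C D : 'M[int]_2) : Prop :=
  exists A B : 'M[int]_2, symplectic (block_mx A B C D).

(* "any matrix A" with (A *; C D) in Sp_4(Z): chosen by Hilbert epsilon *)
Definition Acomp (C D : 'M[int]_2) : 'M[int]_2 :=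
  ClassicalEpsilon.epsilon (inhabits 0) (fun A => exists B, symplectic (block_mx A B C D)).

Definition in_S (R : realType) (Q : 'M[rat]_2) : Prop :=
  Q^T = Q /\
  (forall i : 'I_2, Q i i \is a Num.int) /\
  (forall i j : 'I_2, 2 * Q i j \is a Num.int) /\
  (forall v : 'rV[R]_2, v != 0 ->
      0 < (v *m map_mx (fun q : rat => ratr q) Q *m v^T) 0 0).

Definition ee (R : realType) (x : rat) : R[i] :=
  Complex (cos (2 * pi * ratr x)) (sin (2 * pi * ratr x)).

(* A canonical system of representatives of D mod C Lambda:
   D ~ D' iff C^{-1}(D - D') in Lambda.  Every admissible D has
   C^{-1} D symmetric with entries in (1/|det C|) Z, so the classes are
   represented exactly by D = C P with P = M / |det C|, M symmetric integral
   with entries in [0, |det C|). *)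
Definition symm_of {n : nat} (m : 'I_n * 'I_n * 'I_n) : 'M[rat]_2 :=
  \matrix_(i < 2, j < 2)
    ((if i == j then (if i == 0 then m.1.1 : nat else m.2 : nat)
      else m.1.2 : nat)%:R / n%:R).

Notation Idx C :=
  ('I_`|\det C|%N * 'I_`|\det C|%N * 'I_`|\det C|%N)%type.

Definition Drat (C : 'M[int]_2) (m : Idx C) : 'M[rat]_2 := toQ C *m symm_of m.

Definition Dint (C : 'M[int]_2) (m : Idx C) : 'M[int]_2 := map_mx (fun q : rat => numq q) (Drat C m).

Definition admissible (C : 'M[int]_2) (m : Idx C) : Prop :=
  toQ (Dint C m) = Drat C m /\ completable C (Dint C m).

Definition K (R : realType) (Q T : 'M[rat]_2) (C : 'M[int]_2) : R[i] :=
  \sum_(m : Idx C | `[< admissible C m >])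
    ee R (\tr (toQ (Acomp C (Dint C m)) *m invmx (toQ C) *m Q
               + invmx (toQ C) *m toQ (Dint C m) *m T)).

From HB Require Import structures.
From mathcomp Require Import all_boot all_order all_algebra.
From mathcomp Require Import boolp reals trigo complex.
From mathcomp Require Import ring zify.
From Stdlib Require ClassicalEpsilon.
Import Order.TTheory GRing.Theory Num.Theory.
Local Open Scope ring_scope.

(* An admissible D is C P with P symmetric and C P integral, and the symplectic
   completions of (C, C P) are the matrices (R C, R C P - C^-T; C, C P) with R
   symmetric and R C, R C P - C^-T integral; R is unique modulo integral matrices,
   and the term of K(Q, T; C) indexed by P is e(tr(R Q) + tr(P T)).  Since
   s N + t c = 1, the classes of P modulo integral matrices for N C correspond
   to pairs (P1, P2) for N I and C through P = P1 + P2, P1 = t c P, P2 = s N P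
   (a Chinese remainder theorem); the completions correspond through
   R = X^T R1 X + s^2 R2, and as Q and T are half-integral,
   tr(R Q) + tr(P T) = tr(R1 X Q X^T) + tr(P1 T) + tr(R2 s^2 Q) + tr(P2 T) mod Z. *)

Definition i0 : 'I_2 := ord0.
Definition i1 : 'I_2 := ord_max.

Lemma ord2P (i : 'I_2) : i = i0 \/ i = i1.
Proof. by case: i => [[|[|//]]] lti; [left | right]; apply: val_inj. Qed.

Lemma sum_ord2 (V : nmodType) (F : 'I_2 -> V) : \sum_(i < 2) F i = F i0 + F i1.
Proof.
rewrite big_ord_recr big_ord_recr big_ord0 /= add0r.
by congr (F _ + F _); apply: val_inj.
Qed.

Ltac mx2_entries := apply/matrixP;
  let i := fresh "i" in let j := fresh "j" in move=> i j;
  case: (ord2P i) => ->; case: (ord2P j) => ->; rewrite ?(mxE, sum_ord2) /=.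

Lemma sym_mx22 {R : Type} {M : 'M[R]_2} : M^T = M -> M i1 i0 = M i0 i1.
Proof. by move=> eM; rewrite -[in LHS]eM mxE. Qed.

Lemma det_mx22 (R : comPzRingType) (A : 'M[R]_2) :
  \det A = A i0 i0 * A i1 i1 - A i0 i1 * A i1 i0.
Proof.
rewrite (expand_det_row _ i0) sum_ord2 /cofactor !det_mx11 !mxE.
have -> : lift i0 ord0 = i1 by apply: val_inj.
have -> : lift i1 ord0 = i0 by apply: val_inj.
rewrite /= expr0 expr1; ring.
Qed.

Definition adj22 {R : pzRingType} (A : 'M[R]_2) : 'M[R]_2 :=
  \matrix_(i, j) (if i == i0 then (if j == i0 then A i1 i1 else - A i0 i1)
                  else (if j == i0 then - A i1 i0 else A i0 i0)).

Lemma invmx22 (F : fieldType) (A : 'M[F]_2) :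
  \det A != 0 -> invmx A = (\det A)^-1 *: adj22 A.
Proof.
move=> detA; have A_unit : A \in unitmx by rewrite unitmxE unitfE.
have adjK : ((\det A)^-1 *: adj22 A) *m A = 1%:M.
  by rewrite det_mx22 in detA *; mx2_entries; field.
by rewrite -[invmx A]mul1mx -adjK -mulmxA mulmxV // mulmx1.
Qed.

Notation Zmx := (mxOver (@Num.int rat)).

(* [rpredD] and [rpredB] do not see through the [mxOver] qualifier. *)

Lemma ZmxD {m n} (A B : 'M[rat]_(m, n)) : A \is a Zmx -> B \is a Zmx -> A + B \is a Zmx.
Proof. by move=> /mxOverP hA /mxOverP hB; apply/mxOverP => i j; rewrite mxE rpredD. Qed.

Lemma ZmxB {m n} (A B : 'M[rat]_(m, n)) : A \is a Zmx -> B \is a Zmx -> A - B \is a Zmx.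
Proof. by move=> /mxOverP hA /mxOverP hB; apply/mxOverP => i j; rewrite !mxE rpredB. Qed.

Lemma Zmx_tr {m n} (A : 'M[rat]_(m, n)) : A \is a Zmx -> A^T \is a Zmx.
Proof. by move=> /mxOverP hA; apply/mxOverP => i j; rewrite mxE. Qed.

Ltac Zmx_step := match goal with
  | |- is_true ((_ - _) \is a mxOver _) => apply: ZmxB
  | |- is_true ((_ + _) \is a mxOver _) => apply: ZmxD
  | |- is_true ((_^T) \is a mxOver _) => apply: Zmx_tr
  | |- is_true ((_ *m _) \is a mxOver _) => apply: mxOverM
  | |- is_true ((_ *: _) \is a mxOver _) => apply: mxOverZ
  | |- is_true ((_%:M) \is a mxOver _) => apply: mxOver_scalar
  | |- is_true ((_ * _) \in _) => apply: rpredM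
  | |- is_true ((_ ^+ _) \in _) => apply: rpredX
  end.

Ltac Zmx_closure :=
  repeat first [ assumption | Zmx_step | apply: rpred0 | apply: intr_int ].

Lemma toQ_Zmx {m n} (A : 'M[int]_(m, n)) : toQ A \is a Zmx.
Proof. by apply/mxOverP => i j; rewrite mxE intr_int. Qed.

Lemma ZmxK {m n} (A : 'M[rat]_(m, n)) : A \is a Zmx -> toQ (map_mx numq A) = A.
Proof. by move/mxOverP => hA; apply/matrixP => i j; rewrite !mxE numqK. Qed.

Lemma toQ_inj {m n} : injective (@toQ m n).
Proof.
move=> A B /matrixP eqAB; apply/matrixP => i j.
by have := eqAB i j; rewrite !mxE => /intr_inj.
Qed.

Lemma toQ_unit {n} {C : 'M[int]_n} : \det C != 0 -> toQ C \in unitmx.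
Proof. by rewrite unitmxE /toQ det_map_mx unitfE intr_eq0. Qed.

Lemma periodicz {R : realType} {f : R -> R} {T : R} :
  periodic f T -> forall (a : R) (z : int), f (a + T *~ z) = f a.
Proof.
move=> fT a [n | n]; first by rewrite -pmulrn (periodicn fT).
by rewrite NegzE mulrNz -[in RHS](subrK (T *~ n.+1) a) -pmulrn (periodicn fT).
Qed.

Lemma eeD (R : realType) (x y : rat) : ee R (x + y) = ee R x * ee R y.
Proof.
rewrite /ee rmorphD mulrDr cosD sinD {3}/GRing.mul /=.
by congr Complex; ring.
Qed.

Lemma ee_addz (R : realType) (x k : rat) : k \is a Num.int -> ee R (x + k) = ee R x.
Proof.
move=> /intrP [z ->]; rewrite /ee rmorphD mulrDr rmorph_int.
have -> : 2 * pi * z%:~R = (pi *+ 2) *~ z :> R by rewrite -mulrzr; ring.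
by rewrite (periodicz (@cosD2pi R)) (periodicz (@sinD2pi R)).
Qed.

Definition half_integral (Q : 'M[rat]_2) : Prop :=
  forall S : 'M[rat]_2, S^T = S -> S \is a Zmx -> \tr (S *m Q) \is a Num.int.

Lemma in_S_half_integral (R : realType) (Q : 'M[rat]_2) :
  in_S R Q -> half_integral Q.
Proof.
case=> Qsym [Qdiag [Q2 _]] S Ssym /mxOverP SZ.
rewrite /mxtrace sum_ord2 !mxE !sum_ord2 (sym_mx22 Ssym) (sym_mx22 Qsym).
have -> : S i0 i0 * Q i0 i0 + S i0 i1 * Q i0 i1 + (S i0 i1 * Q i0 i1 + S i1 i1 * Q i1 i1)
   = S i0 i0 * Q i0 i0 + S i1 i1 * Q i1 i1 + S i0 i1 * (2 * Q i0 i1) by ring.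
by apply: rpredD; [apply: rpredD|]; apply: rpredM.
Qed.

Lemma half_integral_conj {X Q : 'M[rat]_2} :
  X \is a Zmx -> half_integral Q -> half_integral (X *m Q *m X^T).
Proof.
move=> XZ hQ S Ssym SZ; rewrite !mulmxA mxtrace_mulC !mulmxA.
apply: hQ; first by rewrite !trmx_mul trmxK Ssym mulmxA.
by rewrite !mxOverM ?Zmx_tr.
Qed.

Lemma half_integral_scale {k : rat} {Q : 'M[rat]_2} :
  k \is a Num.int -> half_integral Q -> half_integral (k *: Q).
Proof. by move=> kZ hQ S Ssym SZ; rewrite -scalemxAr mxtraceZ rpredM ?hQ. Qed.

Section SymplecticBlocks.
Context {R : comUnitRingType} {n : nat}.

Definition Jmx : 'M[R]_(n + n) := block_mx 0 1%:M (- 1%:M) 0.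

Lemma Jmx_sqr : Jmx *m Jmx = - 1%:M.
Proof.
rewrite /Jmx mulmx_block !mulmx0 !mul0mx !mulmx1 !mulmxN !mulmx1 !addr0 !add0r.
by rewrite [1%:M in RHS](scalar_mx_block n n) opp_block_mx !oppr0.
Qed.

Lemma symplectic_dual (M : 'M[R]_(n + n)) :
  M^T *m Jmx *m M = Jmx -> M *m Jmx *m M^T = Jmx.
Proof.
move=> MJM.
have /mulmx1C : (- (Jmx *m M^T *m Jmx)) *m M = 1%:M.
  by rewrite mulNmx -!mulmxA [M^T *m _]mulmxA MJM Jmx_sqr opprK.
rewrite mulmxN !mulmxA => /(canRL (@opprK _)) MJMJ.
by rewrite -[LHS]mulmx1 -[1%:M]opprK -Jmx_sqr mulmxN mulmxA MJMJ mulNmx mul1mx opprK.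
Qed.

Lemma mulmx_Jmx_block (A B C D : 'M[R]_n) :
  let M := block_mx A B C D in
  M^T *m Jmx *m M = block_mx (A^T *m C - C^T *m A) (A^T *m D - C^T *m B)
                             (B^T *m C - D^T *m A) (B^T *m D - D^T *m B).
Proof.
rewrite /Jmx tr_block_mx !mulmx_block.
by rewrite ?(mulmx0, mul0mx, mulmx1, mulmxN, mulNmx, addr0, add0r) ![- _ + _]addrC.
Qed.

Lemma symplectic_blockP (A B C D : 'M[R]_n) :
  let M := block_mx A B C D in M^T *m Jmx *m M = Jmx ->
  [/\ A^T *m C = C^T *m A, A^T *m D - C^T *m B = 1%:M & D *m A^T - C *m B^T = 1%:M].
Proof.
move=> M /[dup] /symplectic_dual.
rewrite mulmx_Jmx_block /M /Jmx tr_block_mx !mulmx_block.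
rewrite ?(mulmx0, mul0mx, mulmx1, mulmxN, mulNmx, addr0, add0r).
move=> /eq_block_mx [_ _ CBDA _] /eq_block_mx [ATC ATD _ _].
split=> //; first by apply/eqP; rewrite -subr_eq0 ATC.
by apply/eqP; rewrite -opprB eqr_oppLR addrC CBDA.
Qed.

Lemma symplectic_completion_eqs (A B C D P : 'M[R]_n) :
  let M := block_mx A B C D in M^T *m Jmx *m M = Jmx ->
  C \in unitmx -> D = C *m P ->
  [/\ (A *m invmx C)^T = A *m invmx C, A *m invmx C *m C = A
    & A *m invmx C *m C *m P - (invmx C)^T = B].
Proof.
move=> M /symplectic_blockP [ATC ATD _] Cu DE.
have invT : (invmx C)^T *m C^T = 1%:M by rewrite trmx_inv mulVmx ?unitmx_tr.
have RC : A *m invmx C *m C = A by rewrite mulmxKV.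
split => //.
  rewrite trmx_mul -[LHS]mulmx1 -(mulmxV Cu) !mulmxA -[_ *m A^T *m C]mulmxA ATC.
  by rewrite mulmxA invT mul1mx.
have CT_APB : C^T *m (A *m P - B) = 1%:M by rewrite mulmxBr mulmxA -ATC -mulmxA -DE.
have -> : (invmx C)^T = A *m P - B by rewrite -[RHS]mul1mx -invT -mulmxA CT_APB mulmx1.
by rewrite RC opprB addrC subrK.
Qed.

End SymplecticBlocks.

Arguments symplectic_blockP {R n A B C D}.
Arguments symplectic_completion_eqs {R n A B C D P}.

(* [R] encodes the completion [(R C, R C P - C^-T; C, C P)] of [(C, C P)]; in the
   notation of the paper, [R = A C^-1]. *)
Definition sp_completion {n} (C P R : 'M[rat]_n) : Prop :=
  [/\ R^T = R, R *m C \is a Zmx & R *m C *m P - (invmx C)^T \is a Zmx].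

Lemma toQ_J4 : toQ J4 = Jmx.
Proof. by rewrite /toQ map_block_mx !map_mx0 map_mxN map_scalar_mx rmorph1. Qed.

Lemma symplecticE (M : 'M[int]_(2 + 2)) :
  symplectic M <-> (toQ M)^T *m Jmx *m toQ M = Jmx.
Proof.
have -> : (toQ M)^T *m Jmx *m toQ M = toQ (M^T *m J4 *m M).
  by rewrite -toQ_J4 /toQ !map_mxM map_trmx.
by rewrite /symplectic -toQ_J4; split => [/eqP -> // | /toQ_inj ->].
Qed.

Lemma symplectic_of_completion (C P R : 'M[rat]_2) :
  \det C != 0 -> P^T = P -> R^T = R ->
  let M := block_mx (R *m C) (R *m C *m P - (invmx C)^T) C (C *m P) in
  M^T *m Jmx *m M = Jmx.
Proof.
move=> detC Psym Rsym M; rewrite mulmx_Jmx_block /Jmx.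
rewrite invmx22 // /adj22; rewrite det_mx22 in detC *.
congr block_mx; mx2_entries; rewrite ?(sym_mx22 Psym) ?(sym_mx22 Rsym);
  field; rewrite ?detC ?andbT //.
Qed.

Section IntegralCompletion.
Variables (A B C D : 'M[int]_2) (P : 'M[rat]_2).
Hypotheses (ABCD_sp : symplectic (block_mx A B C D)) (detC : \det C != 0)
  (DE : toQ D = toQ C *m P).

Let ABCD_spQ :
  let M := block_mx (toQ A) (toQ B) (toQ C) (toQ D) in M^T *m Jmx *m M = Jmx.
Proof. by move: ABCD_sp; rewrite symplecticE /toQ map_block_mx. Qed.

Lemma completion_of_symplectic : sp_completion (toQ C) P (toQ A *m invmx (toQ C)).
Proof.
have [Rsym RC RCP] := symplectic_completion_eqs ABCD_spQ (toQ_unit detC) DE.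
by split; rewrite ?RCP ?RC ?toQ_Zmx.
Qed.

Lemma completion_unique {R : 'M[rat]_2} :
  sp_completion (toQ C) P R -> R - toQ A *m invmx (toQ C) \is a Zmx.
Proof.
case=> _ RC_Z RCP_Z.
have [_ RAC RACP] := symplectic_completion_eqs ABCD_spQ (toQ_unit detC) DE.
have [_ _ DACB] := symplectic_blockP ABCD_spQ.
set U := R - _.
have UC_Z : U *m toQ C \is a Zmx by rewrite mulmxBl RAC ZmxB ?toQ_Zmx.
have UD_Z : U *m toQ D \is a Zmx.
  have -> : U *m toQ D = (R *m toQ C *m P - (invmx (toQ C))^T)
      - (toQ A *m invmx (toQ C) *m toQ C *m P - (invmx (toQ C))^T).
    by rewrite DE /U mulmxBl !mulmxA opprB addrA subrK.
  by rewrite RACP ZmxB ?toQ_Zmx.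
rewrite -[U]mulmx1 -DACB mulmxBr !mulmxA.
by rewrite ZmxB // mxOverM ?Zmx_tr ?toQ_Zmx.
Qed.

End IntegralCompletion.

Arguments completion_of_symplectic {A B C D P}.
Arguments completion_unique {A B C D P} ABCD_sp detC DE {R}.

Lemma completable_of_completion (C D : 'M[int]_2) (P R : 'M[rat]_2) :
  \det C != 0 -> toQ D = toQ C *m P -> P^T = P ->
  sp_completion (toQ C) P R -> completable C D.
Proof.
move=> detC DE Psym [Rsym RC_Z RCP_Z].
exists (map_mx numq (R *m toQ C)), (map_mx numq (R *m toQ C *m P - (invmx (toQ C))^T)).
rewrite symplecticE /toQ map_block_mx -!/(toQ _) !ZmxK // DE.
by apply: symplectic_of_completion; rewrite // det_map_mx intr_eq0.
Qed.

Lemma symm_of_sym {n} (m : 'I_n * 'I_n * 'I_n) : (symm_of m)^T = symm_of m.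
Proof. by apply/matrixP => i j; rewrite !mxE; case: (ord2P i) => ->; case: (ord2P j) => ->. Qed.

Lemma admissibleP {C : 'M[int]_2} {m : Idx C} : \det C != 0 ->
  admissible C m <->
  toQ C *m symm_of m \is a Zmx /\ exists R, sp_completion (toQ C) (symm_of m) R.
Proof.
move=> detC; split.
  case=> DE [A [B ABCD_sp]]; have DE' : toQ (Dint C m) = toQ C *m symm_of m by [].
  split; first by rewrite -DE' toQ_Zmx.
  by exists (toQ A *m invmx (toQ C)); apply: completion_of_symplectic ABCD_sp detC DE'.
case=> CP_Z [R Rc]; have DE : toQ (Dint C m) = toQ C *m symm_of m by rewrite /Dint ZmxK.
by split => //; apply: completable_of_completion detC DE (symm_of_sym m) Rc.
Qed.

Definition Kterm (R : realType) (Q T : 'M[rat]_2) (C : 'M[int]_2) (m : Idx C) : R[i] :=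
  ee R (\tr (toQ (Acomp C (Dint C m)) *m invmx (toQ C) *m Q
             + invmx (toQ C) *m toQ (Dint C m) *m T)).

Lemma KE (R : realType) (Q T : 'M[rat]_2) (C : 'M[int]_2) :
  K R Q T C = \sum_(m : Idx C | `[< admissible C m >]) Kterm R Q T C m.
Proof. by []. Qed.

Lemma KtermE {R : realType} {Q T : 'M[rat]_2} {C : 'M[int]_2} {m : Idx C} {R0 : 'M[rat]_2} :
  \det C != 0 -> admissible C m -> sp_completion (toQ C) (symm_of m) R0 -> half_integral Q ->
  Kterm R Q T C m = ee R (\tr (R0 *m Q) + \tr (symm_of m *m T)).
Proof.
move=> detC [DE [A0 [B0 ABCD0_sp]]] R0c hQ.
set A := Acomp C (Dint C m).
have [B ABCD_sp] : exists B, symplectic (block_mx A B C (Dint C m)).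
  apply: (ClassicalEpsilon.epsilon_spec (inhabits 0)
     (fun A => exists B, symplectic (block_mx A B C (Dint C m)))).
  by exists A0, B0.
have DE' : toQ (Dint C m) = toQ C *m symm_of m by [].
have R0A_Z := completion_unique ABCD_sp detC DE' R0c.
have [Asym _ _] := completion_of_symplectic ABCD_sp detC DE'.
case: R0c => R0sym _ _.
rewrite /Kterm DE' mulmxA mulVmx ?toQ_unit // mul1mx.
set RA := toQ A *m invmx (toQ C) in R0A_Z Asym *.
have -> : \tr (R0 *m Q) + \tr (symm_of m *m T)
    = \tr (RA *m Q + symm_of m *m T) + \tr ((R0 - RA) *m Q).
  by rewrite mulmxBl linearB /= mxtraceD; ring.
by rewrite ee_addz // hQ // linearB /= R0sym Asym.
Qed.

Lemma frac_ord_inj_mod {n} {x y : 'I_n} :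
  ((x : nat)%:R / n%:R - (y : nat)%:R / n%:R : rat) \is a Num.int -> x = y.
Proof.
have n_gt0 : (0 < n)%N by apply: leq_ltn_trans (ltn_ord x).
have n0 : (n%:R : rat) != 0 by rewrite pnatr_eq0 -lt0n.
move=> /intrP [k xyk]; apply: val_inj => /=.
have : (x : nat)%:Z - (y : nat)%:Z = k * n%:Z.
  apply: (intr_inj (R := rat)).
  by rewrite rmorphB rmorphM /= -xyk -mulrBl mulfVK.
have := ltn_ord x; have := ltn_ord y.
have [->|[k_ge1|k_leN1]] : k = 0 \/ 1 <= k \/ k <= -1 by lia.
- by rewrite mul0r; lia.
- have : n%:Z <= k * n%:Z by rewrite -{1}[n%:Z]mul1r ler_wpM2r.
  lia.
- have : k * n%:Z <= - n%:Z by rewrite -mulN1r ler_wpM2r.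
  lia.
Qed.

Lemma symm_of_inj_mod {n} (m m' : 'I_n * 'I_n * 'I_n) :
  symm_of m - symm_of m' \is a Zmx -> m = m'.
Proof.
case: m m' => [[a b] d] [[a' b'] d'] /mxOverP mm'_Z.
have := mm'_Z i0 i0; have := mm'_Z i0 i1; have := mm'_Z i1 i1; rewrite !mxE /=.
by move=> /frac_ord_inj_mod -> /frac_ord_inj_mod -> /frac_ord_inj_mod ->.
Qed.

Lemma symm_of_scale_Zmx {n} (m : 'I_n * 'I_n * 'I_n) : (0 < n)%N ->
  n%:R *: symm_of m \is a Zmx.
Proof.
move=> n_gt0; have n0 : (n%:R : rat) != 0 by rewrite pnatr_eq0 -lt0n.
by apply/mxOverP => i j; rewrite !mxE mulrC mulfVK.
Qed.

(* Meaningful only when [n * q] is an integer. *)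
Definition ord_of_frac {n} (n_gt0 : (0 < n)%N) (q : rat) : 'I_n :=
  Ordinal (ltn_pmod `|(numq (n%:R * q) %% n%:Z)%Z|%N n_gt0).

Lemma ord_of_fracE {n} (n_gt0 : (0 < n)%N) (q : rat) : n%:R * q \is a Num.int ->
  ((ord_of_frac n_gt0 q : nat)%:R / n%:R : rat) - q \is a Num.int.
Proof.
move=> nq_Z; rewrite /ord_of_frac /=.
set z := numq (n%:R * q).
have n0 : (n%:R : rat) != 0 by rewrite pnatr_eq0 -lt0n.
have nz0 : n%:Z != 0 by rewrite eqz_nat -lt0n.
have zn_ge0 := modz_ge0 z nz0.
have zn_lt : (z %% n)%Z < n%:Z by rewrite ltz_pmod ?ltz_nat.
rewrite modn_small -?ltz_nat ?gez0_abs // natr_absz ger0_norm //.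
have -> : q = z%:~R / n%:R by rewrite numqK // [n%:R * q]mulrC mulfK.
have -> : (z %% n)%Z = z - (z %/ n)%Z * n by rewrite {2}(divz_eq z n) addrC addKr.
rewrite -mulrBl rmorphB /= addrAC subrr add0r rmorphM /= -mulNr mulfK //.
by rewrite rpredN intr_int.
Qed.

Definition rep {n} (n_gt0 : (0 < n)%N) (P : 'M[rat]_2) : 'I_n * 'I_n * 'I_n :=
  (ord_of_frac n_gt0 (P i0 i0), ord_of_frac n_gt0 (P i0 i1), ord_of_frac n_gt0 (P i1 i1)).

Lemma repE {n} (n_gt0 : (0 < n)%N) (P : 'M[rat]_2) :
  P^T = P -> n%:R *: P \is a Zmx -> symm_of (rep n_gt0 P) - P \is a Zmx.
Proof.
move=> Psym /mxOverP nP_Z; apply/mxOverP => i j.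
have entry_Z k l : n%:R * P k l \is a Num.int by have := nP_Z k l; rewrite mxE.
case: (ord2P i) => ->; case: (ord2P j) => ->; rewrite !mxE /= ?(sym_mx22 Psym);
  exact: ord_of_fracE.
Qed.

Lemma Zmx_subr_trans {m n} (A B D : 'M[rat]_(m, n)) :
  A - B \is a Zmx -> B - D \is a Zmx -> A - D \is a Zmx.
Proof. by move=> AB_Z BD_Z; rewrite -[A](subrK B) -addrA ZmxD. Qed.

Lemma sp_completion_shift {n} (C P E R : 'M[rat]_n) :
  sp_completion C P R -> E \is a Zmx -> sp_completion C (P + E) R.
Proof.
case=> Rsym RC_Z RCP_Z E_Z; split => //.
by rewrite mulmxDr addrAC ZmxD // mxOverM.
Qed.

Lemma big_bij_in {V : nmodType} {I J : finType} (h : J -> I) (h' : I -> J)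
    (P : pred I) (P' : pred J) (F : I -> V) (G : J -> V) :
  (forall i, P i -> P' (h' i) /\ h (h' i) = i) ->
  (forall j, P' j -> [/\ P (h j), h' (h j) = j & F (h j) = G j]) ->
  \sum_(i | P i) F i = \sum_(j | P' j) G j.
Proof.
move=> h'K hK; rewrite (reindex_onto h h') => [|i /h'K []//].
have P'_of j : P (h j) -> h' (h j) = j -> P' j by move=> /h'K [+ _] <-.
apply: eq_big => [j | j /andP [Phj /eqP h'hj]].
  apply/andP/idP => [[Phj /eqP]|P'j]; first exact: P'_of.
  by have [-> -> _] := hK j P'j.
by have [_ _ ->] := hK j (P'_of j Phj h'hj).
Qed.

Section KloostermanMul.
Variables (N : nat) (C : 'M[int]_2) (s t : int).
Hypotheses (N_gt0 : (0 < N)%N) (detC : \det C != 0)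
  (bezout : s * N%:Z + t * \det C = 1).

Local Notation Cq := (toQ C).
Local Notation c := ((\det C)%:~R : rat).
Local Notation Nq := (N%:R : rat).
Local Notation sq := (s%:~R : rat).
Local Notation tq := (t%:~R : rat).
Local Notation k := ((t * \det C)%:~R : rat).
Local Notation X := (k *: invmx Cq).

Let detCqE : \det Cq = c. Proof. exact: det_map_mx. Qed.
Let Cq_unit : Cq \in unitmx := toQ_unit detC.
Let Nq0 : Nq != 0. Proof. by rewrite pnatr_eq0 -lt0n. Qed.
Let Nq_int : Nq \is a Num.int. Proof. by rewrite -[Nq]/((N%:Z)%:~R) intr_int. Qed.
Let sq_int : sq \is a Num.int. Proof. exact: intr_int. Qed.
Let tq_int : tq \is a Num.int. Proof. exact: intr_int. Qed.
Let kE : k = tq * c. Proof. exact: rmorphM. Qed.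
Let bezoutQ : sq * Nq + k = 1.
Proof.
have := congr1 (fun z : int => z%:~R : rat) bezout.
by rewrite /= rmorphD rmorph1 [X in X + _]rmorphM.
Qed.
Let sE : sq = (1 - k) / Nq. Proof. by rewrite -[X in _ = (X - _) / _]bezoutQ addrK mulfK. Qed.

Let Cq_Z : Cq \is a Zmx := toQ_Zmx C.
Let adjCq_Z : c *: invmx Cq \is a Zmx.
Proof.
rewrite /invmx Cq_unit scalerA -detCqE mulfV //.
by rewrite scale1r /toQ -map_mx_adj toQ_Zmx.
Qed.
Let X_Z : X \is a Zmx. Proof. by rewrite kE -scalerA mxOverZ. Qed.
Let XNC : X *m (Nq *: Cq) = (k * Nq)%:M.
Proof. by rewrite -scalemxAl -scalemxAr mulVmx // scalerA scalemx1. Qed.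

Let scale_k_Zmx {P : 'M[rat]_2} : Cq *m P \is a Zmx -> k *: P \is a Zmx.
Proof.
move=> CP_Z; have -> : k *: P = tq *: ((c *: invmx Cq) *m (Cq *m P)).
  by rewrite -scalemxAl mulKmx // scalerA kE.
by Zmx_closure.
Qed.

Let trCq_invT : Cq^T *m (invmx Cq)^T = 1%:M.
Proof. by rewrite -trmx_mul mulVmx // trmx1. Qed.

Let invmx_NCq : invmx (Nq *: Cq) = Nq^-1 *: invmx Cq.
Proof. by rewrite invmxZ // unitmxE detZ unitfE mulf_neq0 ?expf_neq0 // -unitfE -unitmxE. Qed.

Lemma completion_NC_NI {P' R' P1 : 'M[rat]_2} :
  (Nq *: Cq) *m P' \is a Zmx -> sp_completion (Nq *: Cq) P' R' ->
  P1 - k *: P' \is a Zmx ->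
  Nq%:M *m P1 \is a Zmx /\ sp_completion Nq%:M P1 (Cq^T *m R' *m Cq).
Proof.
move=> NCP_Z [R'sym R'NC_Z R'NCP_Z] P1_Z; rewrite invmx_NCq in R'NCP_Z.
have kNP'_Z : k *: (Nq *: P') \is a Zmx.
  by apply: scale_k_Zmx; rewrite -scalemxAr scalemxAl.
split.
  have -> : Nq%:M *m P1 = Nq *: (P1 - k *: P') + k *: (Nq *: P').
    by mx2_entries; ring.
  by Zmx_closure.
split.
- by rewrite !trmx_mul trmxK R'sym mulmxA.
- have -> : Cq^T *m R' *m Cq *m Nq%:M = Cq^T *m (R' *m (Nq *: Cq)).
    by mx2_entries; ring.
  by Zmx_closure.
- have CR'NCP'_Z : Cq^T *m (R' *m (Nq *: Cq) *m P') - Nq^-1%:M \is a Zmx.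
    have -> : Cq^T *m (R' *m (Nq *: Cq) *m P') - Nq^-1%:M
        = Cq^T *m (R' *m (Nq *: Cq) *m P' - (Nq^-1 *: invmx Cq)^T).
      rewrite mulmxBr [(Nq^-1 *: _)^T]linearZ /=.
      by rewrite -[Cq^T *m (Nq^-1 *: _)]scalemxAr trCq_invT scalemx1.
    by Zmx_closure.
  have -> : Cq^T *m R' *m Cq *m Nq%:M *m P1 - (invmx Nq%:M)^T
      = k *: (Cq^T *m (R' *m (Nq *: Cq) *m P') - Nq^-1%:M)
        + Cq^T *m (R' *m (Nq *: Cq)) *m (P1 - k *: P') - sq%:M.
    by rewrite invmx_scalar tr_scalar_mx sE; mx2_entries; field.
  by Zmx_closure.
Qed.

Lemma completion_NC_C {P' R' P2 : 'M[rat]_2} :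
  (Nq *: Cq) *m P' \is a Zmx -> sp_completion (Nq *: Cq) P' R' ->
  P2 - (sq * Nq) *: P' \is a Zmx ->
  Cq *m P2 \is a Zmx /\ sp_completion Cq P2 (Nq ^+ 2 *: R').
Proof.
move=> NCP_Z [R'sym R'NC_Z R'NCP_Z] P2_Z; rewrite invmx_NCq in R'NCP_Z.
split.
  have -> : Cq *m P2 = Cq *m (P2 - (sq * Nq) *: P') + sq *: ((Nq *: Cq) *m P').
    by mx2_entries; ring.
  by Zmx_closure.
split.
- by rewrite linearZ /= R'sym.
- have -> : Nq ^+ 2 *: R' *m Cq = Nq *: (R' *m (Nq *: Cq)) by mx2_entries; ring.
  by Zmx_closure.
- have -> : Nq ^+ 2 *: R' *m Cq *m P2 - (invmx Cq)^T
      = (sq * Nq ^+ 2) *: (R' *m (Nq *: Cq) *m P' - (Nq^-1 *: invmx Cq)^T)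
        + Nq *: (R' *m (Nq *: Cq) *m (P2 - (sq * Nq) *: P'))
        - tq *: (c *: invmx Cq)^T.
    by rewrite sE kE; mx2_entries; field.
  by Zmx_closure.
Qed.

Lemma completion_NI_C_NC {P1 R1 P2 R2 P' : 'M[rat]_2} :
  Nq%:M *m P1 \is a Zmx -> sp_completion Nq%:M P1 R1 ->
  Cq *m P2 \is a Zmx -> sp_completion Cq P2 R2 ->
  P' - (P1 + P2) \is a Zmx ->
  (Nq *: Cq) *m P' \is a Zmx /\
  sp_completion (Nq *: Cq) P' (X^T *m R1 *m X + sq ^+ 2 *: R2).
Proof.
move=> NP1_Z [R1sym R1N_Z R1NP1_Z] CP2_Z [R2sym R2C_Z R2CP2_Z] P'_Z.
rewrite invmx_scalar tr_scalar_mx in R1NP1_Z.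
split.
  have -> : (Nq *: Cq) *m P' = Cq *m (Nq%:M *m P1) + Nq *: (Cq *m P2)
                                + (Nq *: Cq) *m (P' - (P1 + P2)).
    by mx2_entries; ring.
  by Zmx_closure.
rewrite -[P'](subrK (P1 + P2)) addrC; apply: sp_completion_shift => //.
have R'NC : (X^T *m R1 *m X + sq ^+ 2 *: R2) *m (Nq *: Cq)
    = k *: (X^T *m (R1 *m Nq%:M)) + (sq ^+ 2 * Nq) *: (R2 *m Cq).
  by rewrite mulmxDl -!mulmxA XNC; mx2_entries; ring.
split.
- rewrite linearD /= !trmx_mul trmxK R1sym mulmxA; congr (_ + _).
  by rewrite linearZ /= R2sym.
- by rewrite R'NC; Zmx_closure.
- have kP2_Z := scale_k_Zmx CP2_Z.
  (* The multiples of C^-T add up since (t c)^2 + (s N)^2 - 1 = -2 (s N) (t c). *)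
  have -> : (X^T *m R1 *m X + sq ^+ 2 *: R2) *m (Nq *: Cq) *m (P1 + P2)
              - (invmx (Nq *: Cq))^T
      = k *: (X^T *m (R1 *m Nq%:M *m P1 - Nq^-1%:M))
        + X^T *m (R1 *m Nq%:M) *m (k *: P2)
        + sq ^+ 2 *: (R2 *m Cq *m (Nq%:M *m P1))
        + (sq ^+ 2 * Nq) *: (R2 *m Cq *m P2 - (invmx Cq)^T)
        - (2 * sq * tq) *: (c *: invmx Cq)^T.
    by rewrite R'NC invmx_NCq sE kE; mx2_entries; field.
  by Zmx_closure.
Qed.

Lemma split_NI_C {P1 P2 : 'M[rat]_2} :
  Nq%:M *m P1 \is a Zmx -> Cq *m P2 \is a Zmx ->
  k *: (P1 + P2) - P1 \is a Zmx /\ (sq * Nq) *: (P1 + P2) - P2 \is a Zmx.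
Proof.
move=> NP1_Z CP2_Z; have kP2_Z := scale_k_Zmx CP2_Z; split.
  have -> : k *: (P1 + P2) - P1 = k *: P2 - sq *: (Nq%:M *m P1).
    by rewrite sE; mx2_entries; field.
  by Zmx_closure.
have -> : (sq * Nq) *: (P1 + P2) - P2 = sq *: (Nq%:M *m P1) - k *: P2.
  by rewrite sE; mx2_entries; field.
by Zmx_closure.
Qed.

Local Notation NC := (N%:Z *: C).
Local Notation NI := ((N%:Z)%:M : 'M[int]_2).

Let Nz0 : N%:Z != 0. Proof. by rewrite eqz_nat -lt0n. Qed.
Let detNC : \det NC != 0. Proof. by rewrite detZ mulf_neq0 ?expf_neq0. Qed.
Let detNI : \det NI != 0. Proof. by rewrite det_scalar expf_neq0. Qed.
Let toQ_NC : toQ NC = Nq *: Cq. Proof. exact: map_mxZ. Qed.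
Let toQ_NI : toQ NI = Nq%:M. Proof. exact: map_scalar_mx. Qed.

Let admissible_NC (m : Idx NC) : admissible NC m <->
  (Nq *: Cq) *m symm_of m \is a Zmx /\ exists R, sp_completion (Nq *: Cq) (symm_of m) R.
Proof. by rewrite -toQ_NC; apply: admissibleP. Qed.
Let admissible_NI (m : Idx NI) : admissible NI m <->
  Nq%:M *m symm_of m \is a Zmx /\ exists R, sp_completion Nq%:M (symm_of m) R.
Proof. by rewrite -toQ_NI; apply: admissibleP. Qed.

Let n_gt0 : (0 < `|\det C|)%N. Proof. by rewrite absz_gt0. Qed.
Let nI_gt0 : (0 < `|\det NI|)%N. Proof. by rewrite absz_gt0. Qed.
Let nC_gt0 : (0 < `|\det NC|)%N. Proof. by rewrite absz_gt0. Qed.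
Let nE : (`|\det C|%:R : rat) = `|c|. Proof. by rewrite natr_absz intr_norm. Qed.
Let nIE : (`|\det NI|%:R : rat) = Nq ^+ 2.
Proof. by rewrite natr_absz intr_norm det_scalar rmorphXn normrX ger0_norm ?ler0n. Qed.
Let nCE : (`|\det NC|%:R : rat) = Nq ^+ 2 * `|c|.
Proof.
by rewrite natr_absz intr_norm detZ rmorphM rmorphXn normrM normrX ger0_norm ?ler0n.
Qed.

Let idx_glue (j : Idx NI * Idx C) : Idx NC :=
  rep nC_gt0 (symm_of j.1 + symm_of j.2).
Let idx_split (m : Idx NC) : Idx NI * Idx C :=
  (rep nI_gt0 (k *: symm_of m), rep n_gt0 ((sq * Nq) *: symm_of m)).

Let idx_glueE j : symm_of (idx_glue j) - (symm_of j.1 + symm_of j.2) \is a Zmx.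
Proof.
apply: repE; first by rewrite linearD /= !symm_of_sym.
have -> : `|\det NC|%:R *: (symm_of j.1 + symm_of j.2)
    = `|\det C|%:R *: (`|\det NI|%:R *: symm_of j.1)
      + `|\det NI|%:R *: (`|\det C|%:R *: symm_of j.2).
  by rewrite nCE nIE nE scalerDr !scalerA mulrC.
by rewrite ZmxD // mxOverZ ?symm_of_scale_Zmx ?rpred_nat.
Qed.

Let idx_splitE1 m : symm_of (idx_split m).1 - k *: symm_of m \is a Zmx.
Proof.
apply: repE; first by rewrite linearZ /= symm_of_sym.
have -> : `|\det NI|%:R *: (k *: symm_of m)
    = (tq * Num.sg c) *: (`|\det NC|%:R *: symm_of m).
  by rewrite !scalerA nIE nCE kE [in LHS](numEsg c); congr (_ *: _); ring.
apply: mxOverZ; last exact: symm_of_scale_Zmx.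
by apply: rpredM; rewrite ?sgrEz intr_int.
Qed.

Let idx_splitE2 {m} : admissible NC m ->
  symm_of (idx_split m).2 - (sq * Nq) *: symm_of m \is a Zmx.
Proof.
case/admissible_NC => NCP_Z _; apply: repE; first by rewrite linearZ /= symm_of_sym.
have -> : `|\det C|%:R *: ((sq * Nq) *: symm_of m)
    = (sq * Num.sg c) *: ((c *: invmx Cq) *m ((Nq *: Cq) *m symm_of m)).
  rewrite -!scalemxAl -scalemxAr mulKmx // !scalerA nE normrEsg.
  by congr (_ *: _); ring.
apply: mxOverZ; last exact: mxOverM.
by apply: rpredM; rewrite ?sgrEz intr_int.
Qed.

Let idx_splitK {m} : admissible NC m ->
  [/\ admissible NI (idx_split m).1, admissible C (idx_split m).2
    & idx_glue (idx_split m) = m].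
Proof.
move=> /[dup] m_adm /admissible_NC [NCP_Z [R' R'c]].
have [NP1_Z R1c] := completion_NC_NI NCP_Z R'c (idx_splitE1 m).
have [CP2_Z R2c] := completion_NC_C NCP_Z R'c (idx_splitE2 m_adm).
split; first by apply/admissible_NI; split; last exists (Cq^T *m R' *m Cq).
  by apply/admissibleP => //; split; last exists (Nq ^+ 2 *: R').
apply: symm_of_inj_mod; apply: Zmx_subr_trans (idx_glueE _) _.
rewrite -[X in _ - X]scale1r -bezoutQ [sq * Nq + k]addrC scalerDl opprD addrACA.
by apply: ZmxD; [apply: idx_splitE1 | apply: idx_splitE2].
Qed.

Let idx_glueK {j} : admissible NI j.1 -> admissible C j.2 ->
  admissible NC (idx_glue j) /\ idx_split (idx_glue j) = j.
Proof.
case: j => j1 j2 /= /admissible_NI [NP1_Z [R1 R1c]] /(admissibleP detC) [CP2_Z [R2 R2c]].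
have [NCP_Z R'c] := completion_NI_C_NC NP1_Z R1c CP2_Z R2c (idx_glueE (j1, j2)).
have m_adm : admissible NC (idx_glue (j1, j2)).
  by apply/admissible_NC; split; last exact: ex_intro _ _ R'c.
split => //.
have [kP_Z sNP_Z] := split_NI_C NP1_Z CP2_Z.
have scaled_Z a : a \is a Num.int ->
    a *: symm_of (idx_glue (j1, j2)) - a *: (symm_of j1 + symm_of j2) \is a Zmx.
  by move=> aZ; rewrite -scalerBr mxOverZ ?idx_glueE.
congr pair; apply: symm_of_inj_mod.
  apply: Zmx_subr_trans (idx_splitE1 _) _.
  by apply: Zmx_subr_trans (scaled_Z _ (intr_int _ _)) kP_Z.
apply: Zmx_subr_trans (idx_splitE2 m_adm) _.
by apply: Zmx_subr_trans (scaled_Z _ (rpredM (intr_int _ _) Nq_int)) sNP_Z.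
Qed.

Let Kterm_NC_mul (R : realType) (Q T : 'M[rat]_2) j :
  half_integral Q -> half_integral T -> admissible NI j.1 -> admissible C j.2 ->
  Kterm R Q T NC (idx_glue j) =
    Kterm R (X *m Q *m X^T) T NI j.1 * Kterm R ((s ^+ 2)%:~R *: Q) T C j.2.
Proof.
move=> hQ hT /[dup] adm1 /admissible_NI [NP1_Z [R1 R1c]].
move=> /[dup] adm2 /(admissibleP detC) [CP2_Z [R2 R2c]].
have [m_adm _] := idx_glueK adm1 adm2.
have [_ R'c] := completion_NI_C_NC NP1_Z R1c CP2_Z R2c (idx_glueE j).
rewrite -toQ_NC in R'c; rewrite -toQ_NI in R1c.
rewrite (KtermE detNC m_adm R'c hQ) (KtermE detNI adm1 R1c (half_integral_conj X_Z hQ)).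
rewrite (KtermE detC adm2 R2c (half_integral_scale (intr_int _ _) hQ)) -eeD rmorphXn.
set P' := symm_of (idx_glue j); set P1 := symm_of j.1; set P2 := symm_of j.2.
have -> : \tr ((X^T *m R1 *m X + sq ^+ 2 *: R2) *m Q) + \tr (P' *m T)
    = \tr (R1 *m (X *m Q *m X^T)) + \tr (P1 *m T)
      + (\tr (R2 *m (sq ^+ 2 *: Q)) + \tr (P2 *m T)) + \tr ((P' - (P1 + P2)) *m T).
  by rewrite /mxtrace; rewrite ?(mxE, sum_ord2) /=; ring.
apply: ee_addz; apply: hT; last exact: idx_glueE.
by rewrite linearB linearD /= !symm_of_sym.
Qed.

Theorem K_mul (R : realType) (Q T : 'M[rat]_2) :
  half_integral Q -> half_integral T ->
  K R Q T NC = K R (X *m Q *m X^T) T NI * K R ((s ^+ 2)%:~R *: Q) T C.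
Proof.
move=> hQ hT; rewrite !KE big_distrlr pair_big /=.
apply: (big_bij_in idx_glue idx_split) => [m /asboolP m_adm | [j1 j2] /= /andP[]].
  have [adm1 adm2 ->] := idx_splitK m_adm.
  by split => //; apply/andP; split; apply/asboolP.
move=> /asboolP adm1 /asboolP adm2.
have [m_adm ->] := idx_glueK (j := (j1, j2)) adm1 adm2.
split; [exact/asboolP | by [] | exact: (Kterm_NC_mul R Q T (j1, j2) hQ hT adm1 adm2)].
Qed.

End KloostermanMul.

Theorem lemma6 (R : realType) (N : nat) (C : 'M[int]_2) (s t : int)
    (Q T : 'M[rat]_2) :
  prime N -> (N %% 4 = 3)%N ->
  \det C != 0 -> coprime `|\det C| N ->
  s * N%:Z + t * \det C = 1 ->
  in_S R Q -> in_S R T ->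
  let X : 'M[rat]_2 := ((t * \det C)%:~R : rat) *: invmx (toQ C) in
  K R Q T (N%:Z *: C) =
    K R (X *m Q *m X^T) T (N%:Z)%:M * K R ((s ^+ 2)%:~R *: Q) T C.
Proof.
move=> N_prime _ detC _ bezout Q_S T_S X.
apply: K_mul => //; first exact: prime_gt0.
  exact: in_S_half_integral Q_S.
exact: in_S_half_integral T_S.
Qed.
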